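(* Let $1\leq k\leq n$ and let $\Lambda_1,\dots,\Lambda_d\subset\mathbb{P}^n$ be $(k-1)$-dimensional linear subspaces satisfying $\mathrm{SP}(n-k)$. Let $2\leq r\leq\min\{d-2,\,n-k+1\}$ be an integer such that for a general point $p\in\Lambda_d$ (i.e. for all $p$ in a nonempty Zariski open subset of $\Lambda_d$) one has $p\notin\Lambda_i$ for $i=1,\dots,r$, and the $(k-1)$-planes $\Gamma_i:=\pi_p(\Lambda_i)\subset\mathbb{P}^{n-1}$, $i=1,\dots,r$, satisfy $\mathrm{SP}(n-k-1)$, where $\pi_p\colon\mathbb{P}^n\dashrightarrow\mathbb{P}^{n-1}$ is the projection from $p$. Then one of the following holds: (A) $\Lambda_d\subset\mathrm{Span}(\Lambda_1,\dots,\Lambda_r)$; (B) $\Lambda_1,\dots,\Lambda_r$ satisfy $\mathrm{SP}(n-k)$.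
   Context: For $(k-1)$-dimensional linear subspaces $\Lambda_1,\dots,\Lambda_e\subset\mathbb{P}^N$ (not necessarily distinct), $\mathrm{SP}(N-k)$ means: for every $j\in\{1,\dots,e\}$ and every $(N-k)$-dimensional linear subspace $L\subset\mathbb{P}^N$ meeting each $\Lambda_i$ with $i\neq j$, $L$ also meets $\Lambda_j$. *)

From HB Require Import structures.
From mathcomp Require Import all_boot all_order all_algebra.
From mathcomp Require Import mpoly.
Set Implicit Arguments. Unset Strict Implicit. Unset Printing Implicit Defensive.
Import Order.TTheory GRing.Theory Num.Theory.
Local Open Scope ring_scope.

(* Projective space P^{V-1} over K = lines in K^V = 'rV[K]_V.
   A linear subspace of P^{V-1} of projective dimension m is the row space
   of a matrix A with \rank A = m+1.  A point is a nonzero row vector. *)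

Definition meets (K : fieldType) (V m1 m2 : nat)
  (L : 'M[K]_(m1, V)) (A : 'M[K]_(m2, V)) : Prop :=
  (L :&: A)%MS != 0.

Definition SP (K : fieldType) (V mr : nat) (m e : nat)
  (Lam : nat -> 'M[K]_(mr, V)) : Prop :=
  forall j, (1 <= j <= e)%N ->
  forall L : 'M[K]_V, \rank L = m.+1 ->
    (forall i, (1 <= i <= e)%N -> i != j -> meets L (Lam i)) ->
    meets L (Lam j).

Definition ev (K : fieldType) (V : nat) (f : {mpoly K[V]}) (v : 'rV[K]_V) : K :=
  f.@[fun i => v 0 i].

(* "A property Q holds for a general point p of the projective subspace
   spanned by the rows of A": Q holds at every point of a nonempty Zariski
   open subset of that subspace.  Nonempty Zariski opens contain nonempty
   basic opens {[v] : f(v) <> 0} with f homogeneous, so it suffices to say: *)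
Definition general_in (K : fieldType) (V mr : nat) (A : 'M[K]_(mr, V))
  (Q : 'rV[K]_V -> Prop) : Prop :=
  exists (dg : nat) (f : {mpoly K[V]}),
    f \is dg.-homog /\
    (exists v : 'rV[K]_V, (v <= A)%MS /\ v != 0 /\ ev f v != 0) /\
    (forall p : 'rV[K]_V, (p <= A)%MS -> p != 0 -> ev f p != 0 -> Q p).

(* P : K^{n+1} -> K^n (acting on row vectors) is a linear projection from
   the point p, i.e. its kernel is exactly the line spanned by p;
   it induces pi_p : P^n --> P^{n-1}. *)
Definition proj_from (K : fieldType) (n : nat) (p : 'rV[K]_n.+1)
  (P : 'M[K]_(n.+1, n)) : Prop :=
  (kermx P == p)%MS.

From HB Require Import structures.
From mathcomp Require Import all_boot all_order all_algebra.
From mathcomp Require Import mpoly zify.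
Import Order.TTheory GRing.Theory Num.Theory.
Set Implicit Arguments. Unset Strict Implicit. Unset Printing Implicit Defensive.
Local Open Scope ring_scope.

(* Assume (A) fails and let L be an (n-k)-plane meeting every Lam_i, i <> j,
   but missing Lam_j.  Then Q := L :&: Span(Lam_1, ..., Lam_r) behaves the
   same way.  If a point p of Lam_d with the generic properties lay outside
   Q + Lam_j, then Q + p could be enlarged to an (n-k)-plane still missing
   Lam_j; projecting it from p gives an (n-k-1)-plane that meets every
   pi_p(Lam_i), i <> j, but misses pi_p(Lam_j), against SP(n-k-1).  So a
   general point of Lam_d, hence by Zariski density all of Lam_d, lies in
   Q + Lam_j, inside the span: a contradiction. *)

Section Subspaces.
Variables (K : fieldType) (N : nat).

Lemma meetsS m1 m2 m3 m4 (L1 : 'M[K]_(m1, N)) (A1 : 'M_(m2, N))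
    (L2 : 'M_(m3, N)) (A2 : 'M_(m4, N)) :
  (L1 :&: A1 <= L2 :&: A2)%MS -> meets L1 A1 -> meets L2 A2.
Proof. by move=> sub; apply: contraNneq => eq0; rewrite -submx0 -eq0. Qed.

Lemma mxrank_adds_row m (X : 'M[K]_(m, N)) (p : 'rV_N) :
  ~~ (p <= X)%MS -> \rank (X + p)%MS = (\rank X).+1.
Proof.
move=> pX; have p0 : p != 0 by apply: contraNneq pX => ->; rewrite sub0mx.
have lt : (X < X + p)%MS by rewrite ltmxE addsmxSl addsmx_sub submx_refl.
have le := (mxrank_adds_leqif X p).1; rewrite rank_rV p0 addn1 in le.
by apply/eqP; rewrite eqn_leq le (rank_ltmx lt).
Qed.

Lemma capmx_eq0_rank m1 m2 (A : 'M[K]_(m1, N)) (B : 'M_(m2, N)) :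
  (\rank A + \rank B <= \rank (A + B))%N -> (A :&: B)%MS = 0.
Proof. by have := mxrank_sum_cap A B => sum_cap le; apply/eqP; rewrite -mxrank_eq0; lia. Qed.

Lemma capmx_adds_row_eq0 m1 m2 (Q : 'M[K]_(m1, N)) (A : 'M_(m2, N)) (p : 'rV_N) :
  (Q :&: A)%MS = 0 -> ~~ (p <= Q + A)%MS -> ((Q + p) :&: A)%MS = 0.
Proof.
move=> QA0 pQA; apply: capmx_eq0_rank.
have -> : ((Q + p) + A)%MS = ((Q + A) + p)%MS by rewrite -!addsmxA [(p + _)%MS]addsmxC.
rewrite (mxrank_adds_row pQA) (mxrank_disjoint_sum QA0).
have := (mxrank_adds_leqif Q p).1; have := rank_leq_row p; lia.
Qed.

Lemma capmx0_extend m1 m2 (M : 'M[K]_(m1, N)) (A : 'M_(m2, N)) :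
  (M :&: A)%MS = 0 ->
  exists M' : 'M_N, [/\ (M <= M')%MS, (M' :&: A)%MS = 0 & \rank M' = (N - \rank A)%N].
Proof.
move=> MA0; set C := ((M + A)^C)%MS; exists (M + C)%MS.
have full : \rank ((M + C) + A)%MS = N.
  apply/eqP; rewrite eqn_leq rank_leq_col /=.
  rewrite -{1}(eqP (addsmx_compl_full (M + A)%MS)) mxrankS //.
  by rewrite -!addsmxA [(A + C)%MS]addsmxC.
have rMC : (\rank (M + C)%MS <= N - \rank A)%N.
  have := (mxrank_adds_leqif M C).1; rewrite mxrank_compl (mxrank_disjoint_sum MA0).
  have := rank_leq_col (M + A)%MS; rewrite (mxrank_disjoint_sum MA0); lia.
have := mxrank_sum_cap (M + C)%MS A; rewrite full => cap.
have := rank_leq_col A => rA.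
have MCA0 : ((M + C) :&: A)%MS = 0 by apply/eqP; rewrite -mxrank_eq0; lia.
by split; rewrite ?addsmxSl //; move: cap; rewrite MCA0 mxrank0; lia.
Qed.

End Subspaces.

Section ProjectionFromPoint.
Variables (K : fieldType) (n : nat) (p : 'rV[K]_n.+1) (P : 'M[K]_(n.+1, n)).
Hypotheses (hP : proj_from p P) (p_neq0 : p != 0).

Lemma proj_from_eq0 m (x : 'M_(m, n.+1)) : (x *m P == 0) = (x <= p)%MS.
Proof. by rewrite -sub_kermx (eqmxP hP). Qed.

Lemma mxrank_proj_from m (M : 'M_(m, n.+1)) :
  (p <= M)%MS -> \rank (M *m P) = (\rank M).-1.
Proof.
move=> pM; have := mxrank_mul_ker M P.
by rewrite (cap_eqmx (eqmx_refl M) (eqmxP hP)) (capmx_idPr pM) rank_rV p_neq0 addn1 => <-.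
Qed.

Lemma proj_from_meets m1 m2 (Q : 'M_(m1, n.+1)) (A : 'M_(m2, n.+1)) :
  ~~ (p <= A)%MS -> meets Q A -> meets (Q *m P) (A *m P).
Proof.
move=> pA /rowV0Pn [v]; rewrite sub_capmx => /andP [vQ vA] v0.
apply/rowV0Pn; exists (v *m P); first by rewrite sub_capmx !submxMr.
rewrite proj_from_eq0; apply: contra pA => vp.
have := mxrank_leqif_sup vp; rewrite !rank_rV v0 p_neq0 => /leqif_refl pv.
exact: submx_trans pv vA.
Qed.

Lemma proj_from_capmx_eq0 m1 m2 (M : 'M_(m1, n.+1)) (A : 'M_(m2, n.+1)) :
  (p <= M)%MS -> (M :&: A)%MS = 0 -> (M *m P :&: A *m P)%MS = 0.
Proof.
move=> pM MA0; apply/eqP/rowV0P => y; rewrite sub_capmx => /andP [].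
move=> /submxP [e ->] /submxP [c /eqP].
rewrite !mulmxA -subr_eq0 -mulmxBl proj_from_eq0; set a := c *m A => ap.
have aM : (a <= M)%MS.
  have -> : a = e *m M - (e *m M - a) by rewrite opprB addrC subrK.
  by rewrite addmx_sub ?submxMl // eqmx_opp (submx_trans ap pM).
have : (a <= M :&: A)%MS by rewrite sub_capmx aM submxMl.
rewrite MA0 submx0 => /eqP a0.
by apply/eqP; rewrite proj_from_eq0 -[e *m M]subr0 -a0.
Qed.

Lemma proj_from_SP_adds k r j (Lam : nat -> 'M[K]_(n.+1)) m (Q : 'M_(m, n.+1)) :
  (1 <= j <= r)%N -> \rank (Lam j) = k -> (k < n)%N ->
  (forall i, (1 <= i <= r)%N -> ~~ (p <= Lam i)%MS) ->
  SP (n - k - 1) r (fun i => Lam i *m P) ->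
  (Q :&: Lam j)%MS = 0 ->
  (forall i, (1 <= i <= r)%N -> i != j -> meets Q (Lam i)) ->
  (p <= Q + Lam j)%MS.
Proof.
move=> hj rj kn pLam hSP QJ0 meetsQ; apply/idPn => pQJ.
have [M [QpM MJ0 rM]] := capmx0_extend (capmx_adds_row_eq0 QJ0 pQJ).
have pM : (p <= M)%MS := submx_trans (addsmxSr Q p) QpM.
have rMP : \rank <<M *m P>>%MS = (n - k - 1).+1.
  by rewrite genmxE mxrank_proj_from // rM rj; lia.
have : meets <<M *m P>>%MS (Lam j *m P).
  apply: hSP rMP _ => // i hi ij.
  apply: meetsS (proj_from_meets (pLam i hi) (meetsQ i hi ij)).
  by rewrite capmxS ?genmxE ?submxMr // (submx_trans (addsmxSl Q p) QpM).
apply/negP; rewrite /meets negbK -submx0 -(proj_from_capmx_eq0 pM MJ0).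
by rewrite capmxS ?genmxE.
Qed.

End ProjectionFromPoint.

Lemma meval_line_poly (R : comRingType) N (f : {mpoly R[N]}) (a b : 'I_N -> R) :
  exists g : {poly R}, forall t, g.[t] = f.@[fun i => a i + t * b i].
Proof.
exists (\sum_(m <- msupp f) (f@_m)%:P * \prod_i ((a i)%:P + (b i)%:P * 'X) ^+ m i).
move=> t; rewrite mevalE horner_sum; apply: eq_bigr => m _.
rewrite hornerM hornerC horner_prod; congr (_ * _); apply: eq_bigr => i _.
by rewrite horner_exp hornerD hornerC hornerM hornerC hornerX mulrC.
Qed.

Lemma general_inW (K : fieldType) N m (A : 'M[K]_(m, N)) (Q1 Q2 : 'rV_N -> Prop) :
  (forall x, (x <= A)%MS -> x != 0 -> Q1 x -> Q2 x) ->
  general_in A Q1 -> general_in A Q2.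
Proof.
move=> Q12 [dg [f [fhom [fA Q1A]]]]; exists dg, f; do 2!split=> //.
by move=> x xA x0 fx; apply: Q12 (Q1A x xA x0 fx).
Qed.

Lemma general_in_submx (K : closedFieldType) N m1 m2
    (A : 'M[K]_(m1, N)) (W : 'M_(m2, N)) :
  general_in A (fun x => (x <= W)%MS) -> (A <= W)%MS.
Proof.
case=> [dg [f [_ [[v [vA [_ fv]]] AW]]]].
have inW x : (x <= A)%MS -> ev f x != 0 -> (x <= W)%MS.
  by move=> xA fx; have [->|x0] := eqVneq x 0; [rewrite sub0mx | exact: AW].
apply/row_subP => i; set u := row i A.
have [g gE] := meval_line_poly f (fun j => v 0 j) (fun j => u 0 j).
have ev_line t : ev f (v + t *: u) = g.[t].
  by rewrite gE /ev; apply: meval_eq => j; rewrite !mxE.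
have g0 : g != 0.
  by apply: contraNneq fv => g0; have := ev_line 0; rewrite scale0r addr0 g0 horner0 => ->.
(* The factor 'X forces t != 0, so that u can be recovered from t *: u. *)
have [t] : exists t, ~~ root ('X * g) t.
  by apply/closed_nonrootP; rewrite mulf_neq0 ?polyX_eq0.
rewrite rootM rootX negb_or => /andP [t0 gt].
have tuW : (t *: u <= W)%MS.
  have -> : t *: u = (v + t *: u) - v by rewrite addrC addKr.
  rewrite addmx_sub ?eqmx_opp ?inW ?ev_line //.
  by rewrite addmx_sub // scalemx_sub // row_sub.
by rewrite -[u](scalerK t0) scalemx_sub.
Qed.

Theorem lemma2p14 (K : closedFieldType) (hK : [pchar K] =i pred0)
  (n k d r : nat) (Lam : nat -> 'M[K]_(n.+1))
  (hk : (1 <= k <= n)%N)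
  (hdim : forall i, (1 <= i <= d)%N -> \rank (Lam i) = k)
  (hSP : SP (n - k) d Lam)
  (hr : (2 <= r <= minn (d - 2) (n - k + 1))%N)
  (hgen : general_in (Lam d) (fun p =>
      (forall i, (1 <= i <= r)%N -> ~~ (p <= Lam i)%MS) /\
      exists P : 'M[K]_(n.+1, n), proj_from p P /\
        SP (n - k - 1) r (fun i => Lam i *m P))) :
  (Lam d <= \sum_(1 <= i < r.+1) Lam i)%MS \/ SP (n - k) r Lam.
Proof.
move: hr; rewrite leq_min => /and3P [r_ge2 r_le_d r_le_nk].
set S := (\sum_(1 <= i < r.+1) Lam i)%MS.
have LamS i : (1 <= i <= r)%N -> (Lam i <= S)%MS.
  by move=> hi; rewrite /S (bigD1_seq i) ?iota_uniq ?addsmxSl // mem_index_iota ltnS.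
have [|notA] := boolP (Lam d <= S)%MS; [by left | right].
move=> j hj L rL meetsL; apply: contraNT notA => notLj.
set Q := (L :&: S)%MS.
have QJ0 : (Q :&: Lam j)%MS = 0.
  by apply/eqP; rewrite -submx0 -(eqP (negbNE notLj)) capmxS ?capmxSl.
have meetsQ i : (1 <= i <= r)%N -> i != j -> meets Q (Lam i).
  move=> hi ij; apply: meetsS (meetsL i hi ij).
  by rewrite !sub_capmx capmxSl capmxSr (submx_trans (capmxSr _ _) (LamS i hi)).
apply: submx_trans (_ : Q + Lam j <= S)%MS; last by rewrite addsmx_sub capmxSr LamS.
apply/general_in_submx/(general_inW _ hgen) => p _ p0 [pLam [P [hP hSPP]]].
by apply: (proj_from_SP_adds hP p0 hj (hdim j _) _ pLam hSPP QJ0 meetsQ); lia.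
Qed.
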